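(* Let $\alpha\ge0$, $\mu\ge0$. There is a positive constant $M$ such that for all $g\in C_B[0,\infty)$, $n\in\mathbb{N}$ and $x\in[0,\infty)$, $$|T_n(g;x)-g(x)|\le M\,\omega_2\!\left(g;\frac12\sqrt{\frac{1}{n^2}x\left(8x^3\alpha^2+4x\alpha+n\right)+\frac{2\mu x}{n}\frac{e_\mu(-nx)}{e_\mu(nx)}}\right)+\omega\!\left(g;\frac{2\alpha x^2}{n}\right).$$
   Context: $C_B[0,\infty)$ denotes the space of uniformly continuous bounded functions on $[0,\infty)$ with sup norm. $\omega(g;\delta)=\sup\{|g(s)-g(t)|: s,t\ge0,\ |s-t|\le\delta\}$ and $\omega_2(f;\delta)=\sup_{0<s\le\delta}\|f(\cdot+2s)-2f(\cdot+s)+f(\cdot)\|_{C_B[0,\infty)}$. For $\mu>-\tfrac12$ define $\gamma_\mu(2k)=\dfrac{2^{2k}k!\,\Gamma(k+\mu+1/2)}{\Gamma(\mu+1/2)}$ and $\gamma_\mu(2k+1)=\dfrac{2^{2k+1}k!\,\Gamma(k+\mu+3/2)}{\Gamma(\mu+1/2)}$, $k\ge0$; $e_\mu(x)=\sum_{k\ge0} x^k/\gamma_\mu(k)$; $\theta_k=0$ if $k$ is even and $\theta_k=1$ if $k$ is odd. Let $h_k^\mu(\xi,\alpha)=\gamma_\mu(k)\sum_{j=0}^{\lfloor k/2\rfloor}\dfrac{\alpha^j\xi^{k-2j}}{j!\,\gamma_\mu(k-2j)}$. For $\alpha\ge0,\mu\ge0$, $n\in\mathbb{N}$ and $x\in[0,\infty)$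 define $$T_n(f;x)=\frac{1}{e^{\alpha x^2}e_\mu(nx)}\sum_{k=0}^\infty \frac{h_k^\mu(n,\alpha)}{\gamma_\mu(k)}x^k f\!\left(\frac{k+2\mu\theta_k}{n}\right).$$ *)

From Stdlib Require Import Reals Lra.
From Coquelicot Require Import Coquelicot.
Open Scope R_scope.

Definition Gamma (a : R) : R :=
  RInt_gen (fun t => Rpower t (a - 1) * exp (- t)) (at_right 0) (Rbar_locally p_infty).

Definition gamma_mu (mu : R) (k : nat) : R :=
  let m := Nat.div2 k in
  if Nat.even k then
    2 ^ (2 * m) * INR (Factorial.fact m) * Gamma (INR m + mu + /2) / Gamma (mu + /2)
  else
    2 ^ (2 * m + 1) * INR (Factorial.fact m) * Gamma (INR m + mu + 3/2) / Gamma (mu + /2).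

Definition e_mu (mu x : R) : R := Series (fun k => x ^ k / gamma_mu mu k).

Definition theta (k : nat) : R := if Nat.even k then 0 else 1.

Definition h_mu (mu : R) (k : nat) (xi alpha : R) : R :=
  gamma_mu mu k *
  sum_f_R0 (fun j => alpha ^ j * xi ^ (k - 2 * j)
                      / (INR (Factorial.fact j) * gamma_mu mu (k - 2 * j))) (Nat.div2 k).

Definition T_op (alpha mu : R) (n : nat) (f : R -> R) (x : R) : R :=
  / (exp (alpha * x ^ 2) * e_mu mu (INR n * x)) *
  Series (fun k => h_mu mu k (INR n) alpha / gamma_mu mu k * x ^ k
                   * f ((INR k + 2 * mu * theta k) / INR n)).

Definition CB (g : R -> R) : Prop :=
  (exists B, forall t, 0 <= t -> Rabs (g t) <= B) /\
  (forall eps, 0 < eps -> exists delta, 0 < delta /\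
     forall s t, 0 <= s -> 0 <= t -> Rabs (s - t) < delta -> Rabs (g s - g t) < eps).

(* modulus of continuity (finite for g in CB) *)
Definition omega (g : R -> R) (delta : R) : R :=
  real (Lub_Rbar (fun v => exists s t, 0 <= s /\ 0 <= t /\ Rabs (s - t) <= delta /\
                                        v = Rabs (g s - g t))).

(* second order modulus of smoothness (finite for g in CB) *)
Definition omega2 (f : R -> R) (delta : R) : R :=
  real (Lub_Rbar (fun v => exists s, 0 < s /\ s <= delta /\
     v = real (Lub_Rbar (fun w => exists y, 0 <= y /\
            w = Rabs (f (y + 2 * s) - 2 * f (y + s) + f y))))).

(* [T_op alpha mu n g x] is a positive linear functional [/ m * sum_k w_k g (p_k)] whose
   weights are the Cauchy product of the exponential series of [alpha x^2] (placed on even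
   indices) with the series of [e_mu (n x)].  Since [Gamma (a + 1) = a Gamma a] gives
   [gamma_mu (k + 1) = (k + 1 + 2 mu theta_(k+1)) gamma_mu k], both series have explicit first
   and second moments, hence so do the nodes [p_k]: their mean is [x + beta] with
   [beta = 2 alpha x^2 / n], and their variance [T2] satisfies [T2 + beta^2 = V], the radicand
   in the statement.  Let [phi] be the smoothing of [g] with step [h = sqrt V / 2], built from
   a second primitive; then [|g - phi| <= 6 omega2 (g, h)] and [|phi''| <= 9 omega2 (g, h) / h^2].
   Writing [g = (g - phi) + phi], expanding [phi] to first order at [x], and comparing the
   tangent at the mean [x + beta] gives
   [|T_n g x - g x| <= 12 omega2 (g, h) + (9 omega2 (g, h) / h^2) V + omega (g, beta)],
   that is [M = 48]. *)

From Stdlib Require Import Reals Lra Lia Factorial Classical.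
From Coquelicot Require Import Coquelicot.
Open Scope R_scope.

Lemma exp_le_compat x y : x <= y -> exp x <= exp y.
Proof. intros [H | <-]; [left; apply exp_increasing, H | right; reflexivity]. Qed.

Lemma Rpower_pos x y : 0 < Rpower x y.
Proof. apply exp_pos. Qed.

Lemma is_derive_Rpower c t : 0 < t -> is_derive (fun x => Rpower x c) t (c * Rpower t (c - 1)).
Proof. intros Ht. apply is_derive_Reals, derivable_pt_lim_power, Ht. Qed.

Lemma ln_le_2sqrt t : 1 <= t -> 0 <= ln t <= 2 * sqrt t.
Proof.
  intros Ht. split.
  - rewrite <- ln_1. apply ln_le; lra.
  - assert (Hs : 0 < sqrt t) by (apply sqrt_lt_R0; lra).
    assert (E : ln t = 2 * ln (sqrt t)).
    { rewrite <- (sqrt_sqrt t) at 1 by lra. rewrite ln_mult by exact Hs. ring. }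
    pose proof (exp_ineq1_le (ln (sqrt t))) as H. rewrite exp_ln in H by exact Hs. lra.
Qed.

Lemma Rpower_le_sqrt v p : 0 < v <= 1 -> /2 <= p -> Rpower v p <= sqrt v.
Proof.
  intros Hv Hp. rewrite <- Rpower_sqrt by lra. apply exp_le_compat.
  assert (ln v <= 0) by (rewrite <- ln_1; apply ln_le; lra). nra.
Qed.

(** * The Gamma function *)

Definition gamma_integrand (c t : R) := Rpower t c * exp (- t).

Lemma Gamma_RInt_gen a :
  Gamma a = RInt_gen (gamma_integrand (a - 1)) (at_right 0) (Rbar_locally p_infty).
Proof. reflexivity. Qed.

Lemma gamma_integrand_pos c t : 0 < gamma_integrand c t.
Proof. apply Rmult_lt_0_compat; [apply Rpower_pos | apply exp_pos]. Qed.

Lemma is_derive_gamma_integrand c t : 0 < t ->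
  is_derive (gamma_integrand c) t (c * gamma_integrand (c - 1) t - gamma_integrand c t).
Proof.
  intros Ht. unfold gamma_integrand. auto_derive.
  - eexists. apply is_derive_Rpower, Ht.
  - rewrite (is_derive_unique (fun x : R => Rpower x c) t _ (is_derive_Rpower c t Ht)). ring.
Qed.

Lemma continuous_gamma_integrand c t : 0 < t -> continuous (gamma_integrand c) t.
Proof.
  intros Ht. apply (@ex_derive_continuous R_AbsRing R_NormedModule).
  eexists. apply is_derive_gamma_integrand, Ht.
Qed.

Lemma ex_RInt_gamma_integrand c u v : 0 < u -> 0 < v -> ex_RInt (gamma_integrand c) u v.
Proof.
  intros Hu Hv. apply (@ex_RInt_continuous R_CompleteNormedModule). intros t Ht.
  apply continuous_gamma_integrand.
  destruct (Rle_dec u v); [rewrite Rmin_left in Ht | rewrite Rmin_right in Ht]; lra.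
Qed.

Lemma gamma_integrand_le_Rpower c t : 0 <= t -> gamma_integrand c t <= Rpower t c.
Proof.
  intros Ht. unfold gamma_integrand. pose proof (Rpower_pos t c).
  assert (exp (- t) <= 1) by (rewrite <- exp_0; apply exp_le_compat; lra).
  nra.
Qed.

Lemma gamma_integrand_le_exp_half c t : 1 <= t ->
  gamma_integrand c t <= exp (2 * c * c) * exp (- t / 2).
Proof.
  intros Ht. unfold gamma_integrand, Rpower. rewrite <- !exp_plus. apply exp_le_compat.
  destruct (ln_le_2sqrt t Ht) as [Hln0 Hln].
  assert (Hs : sqrt t * sqrt t = t) by (apply sqrt_sqrt; lra).
  pose proof (sqrt_pos t).
  destruct (Rle_dec 0 c).
  - assert (c * ln t <= c * (2 * sqrt t)) by (apply Rmult_le_compat_l; auto).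
    pose proof (Rle_0_sqr (sqrt t - 2 * c)). unfold Rsqr, Rdiv in *. nra.
  - assert (c * ln t <= 0) by nra. pose proof (Rle_0_sqr c). unfold Rsqr, Rdiv in *. lra.
Qed.

Lemma is_RInt_Rpower c u v : 0 < u -> 0 < v -> -1 < c ->
  is_RInt (fun t => Rpower t c) u v ((Rpower v (c + 1) - Rpower u (c + 1)) / (c + 1)).
Proof.
  intros Hu Hv Hc.
  replace ((Rpower v (c + 1) - Rpower u (c + 1)) / (c + 1)) with
    (minus (Rpower v (c + 1) / (c + 1)) (Rpower u (c + 1) / (c + 1)))
    by (unfold minus, plus, opp; simpl; field; lra).
  assert (Hpos : forall t, Rmin u v <= t <= Rmax u v -> 0 < t).
  { intros t Ht. destruct (Rle_dec u v);
      [rewrite Rmin_left in Ht | rewrite Rmin_right in Ht]; lra. }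
  apply (is_RInt_derive (fun t => Rpower t (c + 1) / (c + 1))); intros t Ht.
  - specialize (Hpos t Ht). auto_derive.
    + eexists. apply is_derive_Rpower, Hpos.
    + rewrite (is_derive_unique (fun x : R => Rpower x (c + 1)) t _ (is_derive_Rpower _ t Hpos)).
      replace (c + 1 - 1) with c by ring. field. lra.
  - apply (@ex_derive_continuous R_AbsRing R_NormedModule).
    eexists. apply is_derive_Rpower, Hpos, Ht.
Qed.

Lemma is_RInt_exp_half c u v :
  is_RInt (fun t => c * exp (- t / 2)) u v (2 * c * (exp (- u / 2) - exp (- v / 2))).
Proof.
  replace (2 * c * (exp (- u / 2) - exp (- v / 2))) with
    (minus (- 2 * c * exp (- v / 2)) (- 2 * c * exp (- u / 2)))
    by (unfold minus, plus, opp; simpl; ring).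
  apply (is_RInt_derive (fun t => - 2 * c * exp (- t / 2))); intros t _.
  - auto_derive; [exact I | unfold Rdiv; field].
  - apply (@ex_derive_continuous R_AbsRing R_NormedModule). auto_derive. exact I.
Qed.

Lemma ex_RInt_gen_at_point_cauchy (F : (R -> Prop) -> Prop) (HF : ProperFilter F)
  (f : R -> R) (b : R) :
  F (fun a => ex_RInt f a b) ->
  (forall eps : posreal, exists P, F P /\
     forall u v, P u -> P v -> u <= v -> Rabs (RInt f u v) < eps) ->
  ex_RInt_gen f F (at_point b).
Proof.
  intros Hex Hc.
  destruct (proj1 (filterlim_locally_cauchy (F := F) (fun a => RInt f a b))) as [l Hl].
  - intros eps. destruct (Hc eps) as [P [HP HPc]].
    exists (fun a => P a /\ ex_RInt f a b). split; [apply filter_and; assumption |].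
    intros u v [Pu Eu] [Pv Ev].
    assert (Evu : ex_RInt f v u)
      by (apply (ex_RInt_Chasles f v b u); [| apply ex_RInt_swap]; assumption).
    assert (E : RInt f v b - RInt f u b = RInt f v u).
    { rewrite <- (RInt_Chasles f v u b Evu Eu). unfold plus; simpl. ring. }
    change (Rabs (RInt f v b - RInt f u b) < eps). rewrite E.
    destruct (Rle_dec v u); [apply HPc; assumption |].
    rewrite <- (opp_RInt_swap f u v) by (apply ex_RInt_swap, Evu).
    unfold opp; simpl. rewrite Rabs_Ropp. apply HPc; auto; lra.
  - exists l. intros P HP. unfold filtermapi.
    apply Filter_prod with (Q := fun a => ex_RInt f a b /\ P (RInt f a b)) (R := fun y => y = b).
    + apply filter_and; [assumption | apply Hl, HP].
    + reflexivity.
    + intros a y [Ha HPa] ->. exists (RInt f a b).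
      split; [apply (@RInt_correct R_CompleteNormedModule), Ha | exact HPa].
Qed.

Lemma at_right_0_interval d : 0 < d -> at_right 0 (fun t => 0 < t < d).
Proof.
  intros Hd. exists (mkposreal d Hd). intros t Ht Ht0. split; [exact Ht0 |].
  change (Rabs (t - 0) < d) in Ht. apply Rabs_def2 in Ht. lra.
Qed.

Lemma Rabs_RInt_gamma_integrand_le c u v (G : R -> R) IG : 0 < u <= v ->
  (forall t, u <= t <= v -> gamma_integrand c t <= G t) -> is_RInt G u v IG ->
  Rabs (RInt (gamma_integrand c) u v) <= IG.
Proof.
  intros Huv HG HI.
  assert (Hex : ex_RInt (gamma_integrand c) u v) by (apply ex_RInt_gamma_integrand; lra).
  rewrite Rabs_pos_eq.
  - rewrite <- (is_RInt_unique G u v IG HI).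
    apply RInt_le; [lra | exact Hex | eexists; exact HI | intros t Ht; apply HG; lra].
  - apply RInt_ge_0; [lra | exact Hex | intros t _; left; apply gamma_integrand_pos].
Qed.

Lemma ex_RInt_gen_gamma_integrand_0 c : -1/2 <= c ->
  ex_RInt_gen (gamma_integrand c) (at_right 0) (at_point 1).
Proof.
  intros Hc. apply ex_RInt_gen_at_point_cauchy; [apply at_right_proper_filter | |].
  - eapply filter_imp; [| apply (at_right_0_interval 1 Rlt_0_1)].
    intros t Ht. apply ex_RInt_gamma_integrand; lra.
  - intros eps. pose proof (cond_pos eps).
    set (d := Rmin 1 (eps * eps / 4)).
    assert (Hd1 : d <= 1) by apply Rmin_l. assert (Hde : d <= eps * eps / 4) by apply Rmin_r.
    assert (Hd : 0 < d) by (apply Rmin_glb_lt; nra).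
    exists (fun t => 0 < t < d). split; [apply at_right_0_interval, Hd |].
    intros u v Hu Hv Huv.
    eapply Rle_lt_trans.
    { apply (Rabs_RInt_gamma_integrand_le c u v (fun t => Rpower t c)); [lra | |].
      - intros t Ht. apply gamma_integrand_le_Rpower. lra.
      - apply is_RInt_Rpower; lra. }
    pose proof (Rpower_pos u (c + 1)).
    assert (Hvs : Rpower v (c + 1) <= sqrt v) by (apply Rpower_le_sqrt; lra).
    assert (Hs : sqrt v < eps / 2).
    { apply Rsqr_incrst_0; [unfold Rsqr; rewrite sqrt_sqrt by lra; nra | apply sqrt_pos | lra]. }
    apply (Rmult_lt_reg_r (c + 1)); [lra |].
    unfold Rdiv. rewrite Rmult_assoc, Rinv_l by lra. nra.
Qed.

Lemma ex_RInt_gen_gamma_integrand_infty c :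
  ex_RInt_gen (gamma_integrand c) (at_point 1) (Rbar_locally p_infty).
Proof.
  cut (ex_RInt_gen (gamma_integrand c) (Rbar_locally p_infty) (at_point 1)).
  { intros [l Hl]. exists (opp l). apply is_RInt_gen_swap, Hl. }
  apply ex_RInt_gen_at_point_cauchy; [apply Rbar_locally_filter | |].
  - exists 0. intros t Ht. apply ex_RInt_gamma_integrand; lra.
  - intros eps. pose proof (cond_pos eps).
    set (K := exp (2 * c * c)). assert (HK : 0 < K) by apply exp_pos.
    assert (He : 0 < eps / (2 * K)) by (apply Rdiv_lt_0_compat; lra).
    set (U := Rmax 1 (- 2 * ln (eps / (2 * K)))).
    assert (HU1 : 1 <= U) by apply Rmax_l.
    assert (HUe : - 2 * ln (eps / (2 * K)) <= U) by apply Rmax_r.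
    exists (fun t => U < t). split; [exists U; auto |].
    intros u v Hu Hv Huv.
    eapply Rle_lt_trans.
    { apply (Rabs_RInt_gamma_integrand_le c u v (fun t => K * exp (- t / 2))); [lra | |].
      - intros t Ht. apply gamma_integrand_le_exp_half. lra.
      - apply is_RInt_exp_half. }
    pose proof (exp_pos (- v / 2)).
    assert (Hexp : exp (- u / 2) < eps / (2 * K)).
    { rewrite <- (exp_ln (eps / (2 * K))) by exact He. apply exp_increasing. lra. }
    apply (Rmult_lt_compat_l (2 * K)) in Hexp; [| lra].
    replace (2 * K * (eps / (2 * K))) with (pos eps) in Hexp by (field; lra). nra.
Qed.

Lemma is_RInt_gen_Gamma a : /2 <= a ->
  is_RInt_gen (gamma_integrand (a - 1)) (at_right 0) (Rbar_locally p_infty) (Gamma a).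
Proof.
  intros Ha. rewrite Gamma_RInt_gen.
  apply (@RInt_gen_correct R_CompleteNormedModule);
    [apply Proper_StrongProper, at_right_proper_filter
    | apply Proper_StrongProper, Rbar_locally_filter |].
  apply (ex_RInt_gen_Chasles _ 1);
    [apply ex_RInt_gen_gamma_integrand_0; lra | apply ex_RInt_gen_gamma_integrand_infty].
Qed.

Lemma RInt_le_is_RInt_gen (f : R -> R) a b l : 0 < a <= b ->
  (forall t, 0 < t -> 0 <= f t) -> (forall u v, 0 < u -> 0 < v -> ex_RInt f u v) ->
  is_RInt_gen f (at_right 0) (Rbar_locally p_infty) l -> RInt f a b <= l.
Proof.
  intros Hab Hf Hex Hl. apply Rnot_lt_le. intros Hlt.
  assert (Heps : 0 < RInt f a b - l) by lra.
  assert (Hev : filter_prod (at_right 0) (Rbar_locally p_infty)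
    (fun uv => (0 < fst uv < a /\ b < snd uv) /\
       exists z, is_RInt f (fst uv) (snd uv) z /\ ball l (mkposreal _ Heps) z)).
  { apply filter_and; [| apply Hl, locally_ball].
    apply (Filter_prod _ _ _ (fun u => 0 < u < a) (fun v => b < v));
      [apply at_right_0_interval; lra | exists b; auto | simpl; auto]. }
  destruct (filter_ex _ Hev) as [[u v] [[Hu Hv] [z [Hz Hball]]]].
  simpl in *. apply (@is_RInt_unique R_CompleteNormedModule) in Hz.
  assert (Hge : RInt f a b <= RInt f u v).
  { assert (Hnonneg : forall s t, 0 < s <= t -> 0 <= RInt f s t)
      by (intros s t Hst; apply RInt_ge_0; [lra | apply Hex; lra | intros; apply Hf; lra]).
    rewrite <- (RInt_Chasles f u a v), <- (RInt_Chasles f a b v) by (apply Hex; lra).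
    unfold plus; simpl. pose proof (Hnonneg u a). pose proof (Hnonneg b v). lra. }
  change (Rabs (z - l) < RInt f a b - l) in Hball. apply Rabs_def2 in Hball. lra.
Qed.

Lemma Gamma_pos a : /2 <= a -> 0 < Gamma a.
Proof.
  intros Ha. apply (Rlt_le_trans _ (RInt (gamma_integrand (a - 1)) 1 2)).
  - apply RInt_gt_0; [lra | intros; apply gamma_integrand_pos |].
    intros t Ht. apply continuous_gamma_integrand. lra.
  - apply RInt_le_is_RInt_gen; [lra | intros; left; apply gamma_integrand_pos | |].
    + intros u v Hu Hv. apply ex_RInt_gamma_integrand; assumption.
    + apply is_RInt_gen_Gamma, Ha.
Qed.

Lemma gamma_integrand_vanishes_at_0 c : /2 <= c ->
  filterlim (gamma_integrand c) (at_right 0) (locally 0).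
Proof.
  intros Hc. apply filterlim_locally. intros eps. pose proof (cond_pos eps).
  assert (Hd : 0 < Rmin 1 (eps * eps)) by (apply Rmin_glb_lt; nra).
  eapply filter_imp; [| apply (at_right_0_interval _ Hd)]. intros t Ht.
  assert (t < 1) by (pose proof (Rmin_l 1 (eps * eps)); lra).
  assert (t < eps * eps) by (pose proof (Rmin_r 1 (eps * eps)); lra).
  change (Rabs (gamma_integrand c t - 0) < eps).
  rewrite Rminus_0_r, Rabs_pos_eq by (left; apply gamma_integrand_pos).
  pose proof (gamma_integrand_le_Rpower c t ltac:(lra)).
  assert (Rpower t c <= sqrt t) by (apply Rpower_le_sqrt; lra).
  assert (sqrt t < eps).
  { apply Rsqr_incrst_0; [unfold Rsqr; rewrite sqrt_sqrt by lra; lra | apply sqrt_pos | lra]. }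
  lra.
Qed.

Lemma gamma_integrand_vanishes_at_infty c :
  filterlim (gamma_integrand c) (Rbar_locally p_infty) (locally 0).
Proof.
  apply filterlim_locally. intros eps. pose proof (cond_pos eps).
  set (K := exp (2 * c * c)). assert (HK : 0 < K) by apply exp_pos.
  assert (He : 0 < eps / K) by (apply Rdiv_lt_0_compat; lra).
  exists (Rmax 1 (- 2 * ln (eps / K))). intros t Ht.
  assert (1 <= t) by (pose proof (Rmax_l 1 (- 2 * ln (eps / K))); lra).
  assert (- 2 * ln (eps / K) < t) by (pose proof (Rmax_r 1 (- 2 * ln (eps / K))); lra).
  change (Rabs (gamma_integrand c t - 0) < eps).
  rewrite Rminus_0_r, Rabs_pos_eq by (left; apply gamma_integrand_pos).
  pose proof (gamma_integrand_le_exp_half c t ltac:(lra)).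
  assert (Hexp : exp (- t / 2) < eps / K).
  { rewrite <- (exp_ln (eps / K)) by exact He. apply exp_increasing. lra. }
  apply (Rmult_lt_compat_l K) in Hexp; [| exact HK].
  replace (K * (eps / K)) with (pos eps) in Hexp by (field; lra).
  unfold K in Hexp. lra.
Qed.

Lemma filter_prod_positive_segment (P : R -> Prop) : (forall t, 0 < t -> P t) ->
  filter_prod (at_right 0) (Rbar_locally p_infty)
    (fun uv => forall t, Rmin (fst uv) (snd uv) <= t <= Rmax (fst uv) (snd uv) -> P t).
Proof.
  intros HP. apply (Filter_prod _ _ _ (fun u => 0 < u) (fun v => 0 < v)).
  - exists (mkposreal 1 Rlt_0_1). auto.
  - exists 0. auto.
  - intros u v Hu Hv t Ht. apply HP. simpl in Ht.
    destruct (Rle_dec u v); [rewrite Rmin_left in Ht | rewrite Rmin_right in Ht]; lra.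
Qed.

(* The boundary terms [t^a e^(-t)] vanish at both ends. *)
Lemma is_RInt_gen_derive_gamma_integrand a : /2 <= a ->
  is_RInt_gen (fun t => a * gamma_integrand (a - 1) t - gamma_integrand a t)
    (at_right 0) (Rbar_locally p_infty) 0.
Proof.
  intros Ha.
  set (dG t := a * gamma_integrand (a - 1) t - gamma_integrand a t).
  assert (HD : forall t, 0 < t -> Derive (gamma_integrand a) t = dG t)
    by (intros t Ht; apply is_derive_unique, is_derive_gamma_integrand, Ht).
  enough (H : is_RInt_gen dG (at_right 0) (Rbar_locally p_infty) (0 - 0))
    by (rewrite Rminus_0_r in H; exact H).
  apply (is_RInt_gen_ext (Derive (gamma_integrand a))).
  { eapply filter_imp; [| apply (filter_prod_positive_segment _ HD)].
    intros uv H t Ht. apply H. lra. }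
  apply is_RInt_gen_Derive.
  - apply filter_prod_positive_segment. intros t Ht.
    eexists. apply is_derive_gamma_integrand, Ht.
  - apply filter_prod_positive_segment. intros t Ht.
    apply (continuous_ext_loc _ dG).
    + apply (filter_imp (fun s => 0 < s)); [intros; symmetry; apply HD; auto |].
      apply (open_gt 0), Ht.
    + apply (@ex_derive_continuous R_AbsRing R_NormedModule). unfold dG. auto_derive.
      repeat split; eexists; apply is_derive_gamma_integrand, Ht.
  - apply gamma_integrand_vanishes_at_0, Ha.
  - apply gamma_integrand_vanishes_at_infty.
Qed.

Lemma Gamma_succ a : /2 <= a -> Gamma (a + 1) = a * Gamma a.
Proof.
  intros Ha.
  pose proof (is_RInt_gen_Gamma a ltac:(lra)) as HG. apply (is_RInt_gen_scal _ a) in HG.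
  pose proof (is_RInt_gen_minus _ _ _ _ HG (is_RInt_gen_derive_gamma_integrand a Ha)) as H.
  apply (is_RInt_gen_ext _ (gamma_integrand a)) in H.
  2: { apply filter_forall. intros uv t _. unfold minus, plus, opp, scal; simpl; unfold mult; simpl.
       ring. }
  rewrite Gamma_RInt_gen. replace (a + 1 - 1) with a by ring.
  rewrite (is_RInt_gen_unique _ _ H). unfold minus, plus, opp, scal; simpl; unfold mult; simpl.
  ring.
Qed.

(** * The coefficients [gamma_mu] *)

Definition dunkl_index (mu : R) (k : nat) := INR k + 2 * mu * theta k.

Lemma theta_double m : theta (2 * m) = 0.
Proof. unfold theta. rewrite Nat.even_mul. reflexivity. Qed.

Lemma theta_succ_double m : theta (S (2 * m)) = 1.
Proof. unfold theta. rewrite Nat.even_succ, Nat.odd_mul. reflexivity. Qed.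

Lemma theta_sub_double k j : (2 * j <= k)%nat -> theta (k - 2 * j) = theta k.
Proof.
  intros H. unfold theta. rewrite Nat.even_sub, Nat.even_mul by exact H.
  destruct (Nat.even k); reflexivity.
Qed.

Lemma dunkl_index_0 mu : dunkl_index mu 0 = 0.
Proof. unfold dunkl_index, theta. simpl. ring. Qed.

Lemma dunkl_index_S mu k : dunkl_index mu (S k) = dunkl_index mu k + 1 + 2 * mu * (-1) ^ k.
Proof.
  unfold dunkl_index. rewrite S_INR.
  destruct (Nat.Even_or_Odd k) as [[m ->] | [m ->]].
  - rewrite theta_succ_double, theta_double, pow_1_even. ring.
  - replace (S (2 * m + 1)) with (2 * S m)%nat by lia.
    replace (2 * m + 1)%nat with (S (2 * m)) by lia.
    rewrite theta_succ_double, theta_double, pow_1_odd. ring.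
Qed.

Lemma dunkl_index_sub_double mu k j : (2 * j <= k)%nat ->
  dunkl_index mu k = 2 * INR j + dunkl_index mu (k - 2 * j).
Proof.
  intros H. unfold dunkl_index. rewrite theta_sub_double, minus_INR, mult_INR by exact H.
  simpl (INR 2). ring.
Qed.

Lemma gamma_mu_double mu m : gamma_mu mu (2 * m) =
  2 ^ (2 * m) * INR (fact m) * Gamma (INR m + mu + /2) / Gamma (mu + /2).
Proof. unfold gamma_mu. rewrite Nat.even_mul, Nat.div2_double. reflexivity. Qed.

Lemma gamma_mu_succ_double mu m : gamma_mu mu (S (2 * m)) =
  2 ^ (2 * m + 1) * INR (fact m) * Gamma (INR m + mu + 3/2) / Gamma (mu + /2).
Proof.
  unfold gamma_mu. rewrite Nat.even_succ, Nat.odd_mul, Nat.div2_succ_double. reflexivity.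
Qed.

Section GammaMu.

Variable mu : R.
Hypothesis mu_ge0 : 0 <= mu.

Lemma INR_le_dunkl_index k : INR k <= dunkl_index mu k.
Proof. unfold dunkl_index, theta. destruct (Nat.even k); nra. Qed.

Lemma dunkl_index_ge0 k : 0 <= dunkl_index mu k.
Proof. pose proof (pos_INR k). pose proof (INR_le_dunkl_index k). lra. Qed.

Lemma dunkl_index_S_pos k : 0 < dunkl_index mu (S k).
Proof. pose proof (INR_le_dunkl_index (S k)). pose proof (pos_INR k). rewrite S_INR in *. lra. Qed.

Lemma gamma_mu_0 : gamma_mu mu 0 = 1.
Proof.
  change 0%nat with (2 * 0)%nat. rewrite gamma_mu_double. simpl.
  replace (0 + mu + /2) with (mu + /2) by ring.
  pose proof (Gamma_pos (mu + /2) ltac:(lra)). field. lra.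
Qed.

(* The two parities reduce to [Gamma (a + 1) = a Gamma a] at [a = m + mu + 1/2]. *)
Lemma gamma_mu_S k : gamma_mu mu (S k) = dunkl_index mu (S k) * gamma_mu mu k.
Proof.
  pose proof (Gamma_pos (mu + /2) ltac:(lra)).
  unfold dunkl_index.
  destruct (Nat.Even_or_Odd k) as [[m ->] | [m ->]].
  - rewrite gamma_mu_succ_double, gamma_mu_double, theta_succ_double.
    replace (INR m + mu + 3/2) with ((INR m + mu + /2) + 1) by field.
    rewrite Gamma_succ by (pose proof (pos_INR m); lra).
    rewrite S_INR, mult_INR, pow_add. simpl (INR 2). field. lra.
  - replace (S (2 * m + 1)) with (2 * S m)%nat by lia.
    replace (2 * m + 1)%nat with (S (2 * m)) by lia.
    rewrite gamma_mu_double, gamma_mu_succ_double, theta_double.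
    replace (INR (S m) + mu + /2) with (INR m + mu + 3/2) by (rewrite S_INR; field).
    replace (2 * S m)%nat with (2 * m + 1 + 1)%nat by lia.
    rewrite (pow_add 2 (2 * m + 1) 1), fact_simpl, !plus_INR, !mult_INR, !S_INR.
    change (INR 0) with 0. field. lra.
Qed.

Lemma gamma_mu_pos k : 0 < gamma_mu mu k.
Proof.
  induction k as [| k IH]; [rewrite gamma_mu_0; lra |].
  rewrite gamma_mu_S. apply Rmult_lt_0_compat; [apply dunkl_index_S_pos | exact IH].
Qed.

Lemma fact_le_gamma_mu k : INR (fact k) <= gamma_mu mu k.
Proof.
  induction k as [| k IH]; [rewrite gamma_mu_0; simpl; lra |].
  rewrite gamma_mu_S, fact_simpl, mult_INR.
  apply Rmult_le_compat; [apply pos_INR | apply pos_INR | apply INR_le_dunkl_index | exact IH].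
Qed.

End GammaMu.

Lemma is_series_Rext (a b : nat -> R) (la lb : R) :
  (forall n, a n = b n) -> la = lb -> is_series a la -> is_series b lb.
Proof. intros Hab <- Ha. apply (is_series_ext a b la Hab Ha). Qed.

Lemma is_series_Rplus (a b : nat -> R) (la lb : R) :
  is_series a la -> is_series b lb -> is_series (fun n => a n + b n) (la + lb).
Proof. apply (is_series_plus a b la lb). Qed.

Lemma is_series_Rminus (a b : nat -> R) (la lb : R) :
  is_series a la -> is_series b lb -> is_series (fun n => a n - b n) (la - lb).
Proof. apply (is_series_minus a b la lb). Qed.

Lemma is_series_Rscal (c : R) (a : nat -> R) (la : R) :
  is_series a la -> is_series (fun n => c * a n) (c * la).
Proof. apply (is_series_scal c a la). Qed.

Lemma is_series_shift (a : nat -> R) (l : R) :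
  is_series (fun k => a (S k)) (l - a 0%nat) -> is_series a l.
Proof. intros H. apply is_series_decr_1, H. Qed.

Lemma is_series_first_term_only (a : nat -> R) :
  (forall k, a (S k) = 0) -> is_series a (a 0%nat).
Proof.
  intros Ha. apply (filterlim_ext (fun _ => a 0%nat)); [| apply filterlim_const].
  intros n. induction n as [| n IH]; [rewrite sum_O; reflexivity |].
  rewrite sum_Sn, <- IH, Ha. unfold plus; simpl. ring.
Qed.

Lemma is_series_first_term_le (a : nat -> R) (l : R) :
  (forall k, 0 <= a k) -> is_series a l -> a 0%nat <= l.
Proof.
  intros Ha Hl. apply (closed_filterlim_loc _ (fun u => a 0%nat <= u) l Hl); [| apply closed_ge].
  exists 0%nat. intros n _. induction n as [| n IH]; [rewrite sum_O; lra |].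
  rewrite sum_Sn. unfold plus; simpl. pose proof (Ha (S n)). lra.
Qed.

Lemma Rabs_Series_le (a b : nat -> R) (lb : R) :
  (forall k, Rabs (a k) <= b k) -> is_series b lb -> ex_series a /\ Rabs (Series a) <= lb.
Proof.
  intros Hab Hb.
  assert (Habs : ex_series (fun k => Rabs (a k))).
  { apply (@ex_series_le R_AbsRing R_CompleteNormedModule _ b); [| exists lb; exact Hb].
    intros k. change (Rabs (Rabs (a k)) <= b k). rewrite Rabs_Rabsolu. apply Hab. }
  split; [apply ex_series_Rabs, Habs |].
  eapply Rle_trans; [apply Series_Rabs, Habs |].
  rewrite <- (is_series_unique b lb Hb).
  apply Series_le; [intros k; split; [apply Rabs_pos | apply Hab] | exists lb; exact Hb].
Qed.

(* The coefficient of [t^k] in [(sum_j a_j t^(2j)) * (sum_m b_m t^m)]. *)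
Definition cauchy_product2 (a b : nat -> R) (k : nat) :=
  sum_f_R0 (fun j => a j * b (k - 2 * j)%nat) (Nat.div2 k).

(* Padding [a] with zeros at odd indices reduces [cauchy_product2] to the usual Cauchy product. *)
Definition pad_even (a : nat -> R) (i : nat) := if Nat.even i then a (Nat.div2 i) else 0.

Lemma sum_pad_even (a c : nat -> R) k :
  sum_f_R0 (fun i => pad_even a i * c i) k =
  sum_f_R0 (fun j => a j * c (2 * j)%nat) (Nat.div2 k).
Proof.
  assert (Hm : forall m,
    sum_f_R0 (fun i => pad_even a i * c i) (2 * m) = sum_f_R0 (fun j => a j * c (2 * j)%nat) m /\
    sum_f_R0 (fun i => pad_even a i * c i) (S (2 * m)) = sum_f_R0 (fun j => a j * c (2 * j)%nat) m).
  { induction m as [| m [IH1 IH2]]; [unfold pad_even; simpl; split; ring |].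
    assert (E : sum_f_R0 (fun i => pad_even a i * c i) (2 * S m) =
                sum_f_R0 (fun j => a j * c (2 * j)%nat) (S m)).
    { replace (2 * S m)%nat with (S (S (2 * m))) by lia. rewrite tech5, IH2, tech5.
      unfold pad_even. replace (S (S (2 * m))) with (2 * S m)%nat by lia.
      rewrite Nat.even_mul, Nat.div2_double. reflexivity. }
    split; [exact E |]. rewrite tech5, E. unfold pad_even.
    rewrite Nat.even_succ, Nat.odd_mul. simpl. ring. }
  destruct (Nat.Even_or_Odd k) as [[m ->] | [m ->]].
  - rewrite Nat.div2_double. apply Hm.
  - replace (2 * m + 1)%nat with (S (2 * m)) by lia. rewrite Nat.div2_succ_double. apply Hm.
Qed.

Lemma sum_n_pad_even (a : nat -> R) k : sum_n (pad_even a) k = sum_n a (Nat.div2 k).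
Proof.
  rewrite !sum_n_Reals, <- (sum_eq (fun i => pad_even a i * 1)) by (intros; ring).
  rewrite sum_pad_even. apply sum_eq. intros; ring.
Qed.

Lemma is_series_pad_even (a : nat -> R) (l : R) : is_series a l -> is_series (pad_even a) l.
Proof.
  intros H. apply (filterlim_ext (fun k => sum_n a (Nat.div2 k))).
  { intros k. symmetry. apply sum_n_pad_even. }
  apply (filterlim_comp _ _ _ Nat.div2 (sum_n a) _ Hierarchy.eventually); [| exact H].
  intros P [N HN]. exists (2 * N)%nat. intros n Hn. apply HN.
  pose proof (Nat.div2_odd n). destruct (Nat.odd n); simpl in *; lia.
Qed.

Lemma is_series_cauchy_product2 (a b : nat -> R) (la lb : R) :
  (forall n, 0 <= a n) -> (forall n, 0 <= b n) ->
  is_series a la -> is_series b lb -> is_series (cauchy_product2 a b) (la * lb).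
Proof.
  intros Ha Hb Sa Sb.
  eapply is_series_Rext; [| reflexivity |].
  2: { apply (is_series_mult_pos (pad_even a) b la lb (is_series_pad_even a la Sa) Sb);
         [| exact Hb].
       intros n. unfold pad_even. destruct (Nat.even n); [apply Ha | lra]. }
  intros k. apply (sum_pad_even a (fun i => b (k - i)%nat)).
Qed.

Lemma cauchy_product2_ge0 (a b : nat -> R) k :
  (forall n, 0 <= a n) -> (forall n, 0 <= b n) -> 0 <= cauchy_product2 a b k.
Proof. intros Ha Hb. apply cond_pos_sum. intros j. apply Rmult_le_pos; auto. Qed.

Lemma le_div2_double k j : (j <= Nat.div2 k)%nat -> (2 * j <= k)%nat.
Proof. intros H. pose proof (Nat.div2_odd k). destruct (Nat.odd k); simpl in *; lia. Qed.

Definition exp_term (y : R) (j : nat) := y ^ j / INR (fact j).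

Lemma is_series_exp y : is_series (exp_term y) (exp y).
Proof.
  eapply is_series_Rext; [| reflexivity | apply (is_exp_Reals y)].
  intros j. unfold exp_term, scal; simpl; unfold mult; simpl.
  rewrite pow_n_pow. unfold Rdiv. ring.
Qed.

Definition e_mu_term (mu z : R) (m : nat) := z ^ m / gamma_mu mu m.

Lemma is_series_e_mu mu z : 0 <= mu -> is_series (e_mu_term mu z) (e_mu mu z).
Proof.
  intros Hmu. apply Series_correct, ex_series_Rabs.
  apply (@ex_series_le R_AbsRing R_CompleteNormedModule _ (exp_term (Rabs z)));
    [| eexists; apply is_series_exp].
  intros m. change (Rabs (Rabs (e_mu_term mu z m)) <= exp_term (Rabs z) m).
  unfold e_mu_term, exp_term, Rdiv.
  rewrite Rabs_Rabsolu, Rabs_mult, <- RPow_abs, Rabs_inv, (Rabs_pos_eq (gamma_mu mu m))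
    by (left; apply gamma_mu_pos, Hmu).
  apply Rmult_le_compat_l; [apply pow_le, Rabs_pos |].
  apply Rinv_le_contravar; [apply INR_fact_lt_0 | apply fact_le_gamma_mu, Hmu].
Qed.

(** * Moments of the weights of [T_op] *)

Lemma exp_term_ge0 y j : 0 <= y -> 0 <= exp_term y j.
Proof.
  intros Hy. apply Rmult_le_pos; [apply pow_le, Hy |].
  left. apply Rinv_0_lt_compat, INR_fact_lt_0.
Qed.

Lemma exp_term_S y j : INR (S j) * exp_term y (S j) = y * exp_term y j.
Proof.
  unfold exp_term. rewrite fact_simpl, mult_INR. simpl pow.
  pose proof (INR_fact_lt_0 j). pose proof (pos_INR j). rewrite S_INR. field. lra.
Qed.

Lemma is_series_exp_moment1 y : is_series (fun j => INR j * exp_term y j) (y * exp y).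
Proof.
  apply is_series_shift.
  eapply is_series_Rext; [| | apply (is_series_Rscal y _ _ (is_series_exp y))].
  - intros j. symmetry. apply exp_term_S.
  - simpl. ring.
Qed.

Lemma is_series_exp_moment2 y :
  is_series (fun j => INR j * INR j * exp_term y j) (y * (y + 1) * exp y).
Proof.
  apply is_series_shift.
  eapply is_series_Rext; [| | apply (is_series_Rplus _ _ _ _
    (is_series_Rscal y _ _ (is_series_exp_moment1 y)) (is_series_Rscal y _ _ (is_series_exp y)))].
  - intros j. rewrite Rmult_assoc, exp_term_S, S_INR. ring.
  - simpl. ring.
Qed.

Section EMuMoments.

Variables mu z : R.
Hypothesis mu_ge0 : 0 <= mu.

Lemma e_mu_term_ge0 m : 0 <= z -> 0 <= e_mu_term mu z m.
Proof.
  intros Hz. apply Rmult_le_pos; [apply pow_le, Hz |].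
  left. apply Rinv_0_lt_compat, gamma_mu_pos, mu_ge0.
Qed.

Lemma e_mu_term_S m : dunkl_index mu (S m) * e_mu_term mu z (S m) = z * e_mu_term mu z m.
Proof.
  unfold e_mu_term. rewrite gamma_mu_S by exact mu_ge0.
  pose proof (gamma_mu_pos mu mu_ge0 m). pose proof (dunkl_index_S_pos mu mu_ge0 m).
  simpl pow. field. lra.
Qed.

Lemma is_series_e_mu_moment1 :
  is_series (fun m => dunkl_index mu m * e_mu_term mu z m) (z * e_mu mu z).
Proof.
  apply is_series_shift.
  eapply is_series_Rext; [| | apply (is_series_Rscal z _ _ (is_series_e_mu mu z mu_ge0))].
  - intros m. symmetry. apply e_mu_term_S.
  - rewrite dunkl_index_0. ring.
Qed.

Lemma is_series_e_mu_alternating :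
  is_series (fun m => (-1) ^ m * e_mu_term mu z m) (e_mu mu (- z)).
Proof.
  eapply is_series_Rext; [| reflexivity | apply (is_series_e_mu mu (- z) mu_ge0)].
  intros m. unfold e_mu_term, Rdiv.
  replace (- z) with (-1 * z) by ring. rewrite Rpow_mult_distr. ring.
Qed.

Lemma is_series_e_mu_moment2 :
  is_series (fun m => dunkl_index mu m * dunkl_index mu m * e_mu_term mu z m)
    (z * (z * e_mu mu z + e_mu mu z + 2 * mu * e_mu mu (- z))).
Proof.
  apply is_series_shift.
  eapply is_series_Rext; [| | apply (is_series_Rscal z _ _ (is_series_Rplus _ _ _ _
    (is_series_Rplus _ _ _ _ is_series_e_mu_moment1 (is_series_e_mu mu z mu_ge0))
    (is_series_Rscal (2 * mu) _ _ is_series_e_mu_alternating)))].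
  - intros m. rewrite Rmult_assoc, e_mu_term_S, dunkl_index_S. ring.
  - rewrite dunkl_index_0. ring.
Qed.

End EMuMoments.

Definition weight (alpha mu N x : R) (k : nat) := h_mu mu k N alpha / gamma_mu mu k * x ^ k.

Definition node (mu N : R) (k : nat) := dunkl_index mu k / N.

Lemma T_op_weight alpha mu n f x :
  T_op alpha mu n f x = / (exp (alpha * x ^ 2) * e_mu mu (INR n * x)) *
    Series (fun k => weight alpha mu (INR n) x k * f (node mu (INR n) k)).
Proof. reflexivity. Qed.

Section WeightMoments.

Variables alpha mu N x : R.
Hypothesis alpha_ge0 : 0 <= alpha.
Hypothesis mu_ge0 : 0 <= mu.
Hypothesis N_pos : 0 < N.
Hypothesis x_ge0 : 0 <= x.

Lemma weight_cauchy_product2 k :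
  weight alpha mu N x k = cauchy_product2 (exp_term (alpha * x ^ 2)) (e_mu_term mu (N * x)) k.
Proof.
  unfold weight, h_mu, cauchy_product2. pose proof (gamma_mu_pos mu mu_ge0 k).
  set (S := sum_f_R0 _ (Nat.div2 k)).
  replace (gamma_mu mu k * S / gamma_mu mu k * x ^ k) with (x ^ k * S) by (field; lra).
  unfold S. rewrite scal_sum. apply sum_eq. intros j Hj.
  assert (Ek : x ^ k = x ^ (2 * j) * x ^ (k - 2 * j))
    by (rewrite <- pow_add; f_equal; apply le_div2_double in Hj; lia).
  unfold exp_term, e_mu_term. rewrite Ek, !Rpow_mult_distr, <- pow_mult.
  pose proof (INR_fact_lt_0 j). pose proof (gamma_mu_pos mu mu_ge0 (k - 2 * j)).
  field. lra.
Qed.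

Lemma weight_node_expand (F : R -> R) k :
  weight alpha mu N x k * F (node mu N k) =
  sum_f_R0 (fun j => exp_term (alpha * x ^ 2) j * e_mu_term mu (N * x) (k - 2 * j)
    * F ((2 * INR j + dunkl_index mu (k - 2 * j)) / N)) (Nat.div2 k).
Proof.
  rewrite weight_cauchy_product2. unfold cauchy_product2. rewrite Rmult_comm, scal_sum.
  apply sum_eq. intros j Hj. unfold node.
  rewrite (dunkl_index_sub_double mu k j) by (apply le_div2_double, Hj). ring.
Qed.

Lemma weight_ge0 k : 0 <= weight alpha mu N x k.
Proof.
  rewrite weight_cauchy_product2. apply cauchy_product2_ge0; intros j.
  - apply exp_term_ge0, Rmult_le_pos; [exact alpha_ge0 | apply pow_le, x_ge0].
  - apply e_mu_term_ge0; [exact mu_ge0 | nra].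
Qed.

Lemma node_ge0 k : 0 <= node mu N k.
Proof.
  apply Rmult_le_pos; [apply dunkl_index_ge0, mu_ge0 | left; apply Rinv_0_lt_compat, N_pos].
Qed.

Lemma weight_0 : weight alpha mu N x 0 = 1.
Proof. unfold weight, h_mu. simpl. rewrite gamma_mu_0 by exact mu_ge0. field. Qed.

Lemma node_0 : node mu N 0 = 0.
Proof. unfold node. rewrite dunkl_index_0. unfold Rdiv. ring. Qed.

Definition weight_mass := exp (alpha * x ^ 2) * e_mu mu (N * x).

Definition node_bias := 2 * alpha * x ^ 2 / N.

Definition node_variance := (4 * alpha ^ 2 * x ^ 4 + 4 * alpha * x ^ 2 + N * x) / N ^ 2
  + 2 * mu * x / N * (e_mu mu (- (N * x)) / e_mu mu (N * x)).

Let y_ge0 : 0 <= alpha * x ^ 2.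
Proof. apply Rmult_le_pos; [exact alpha_ge0 | apply pow_le, x_ge0]. Qed.

Let Nx_ge0 : 0 <= N * x.
Proof. nra. Qed.

Let A_ge0 j : 0 <= exp_term (alpha * x ^ 2) j.
Proof. apply exp_term_ge0, y_ge0. Qed.

Let B_ge0 m : 0 <= e_mu_term mu (N * x) m.
Proof. apply e_mu_term_ge0; [exact mu_ge0 | exact Nx_ge0]. Qed.

Lemma is_series_weight : is_series (weight alpha mu N x) weight_mass.
Proof.
  eapply is_series_Rext; [intros k; symmetry; apply weight_cauchy_product2 | reflexivity |].
  apply is_series_cauchy_product2; [exact A_ge0 | exact B_ge0 | apply is_series_exp |].
  apply is_series_e_mu, mu_ge0.
Qed.

Lemma weight_mass_pos : 0 < weight_mass.
Proof.
  pose proof (is_series_first_term_le _ _ weight_ge0 is_series_weight).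
  rewrite weight_0 in *. lra.
Qed.

Lemma e_mu_Nx_pos : 0 < e_mu mu (N * x).
Proof.
  pose proof weight_mass_pos. pose proof (exp_pos (alpha * x ^ 2)).
  unfold weight_mass in *. destruct (Rlt_le_dec 0 (e_mu mu (N * x))); [assumption | nra].
Qed.

Lemma is_series_weight_node :
  is_series (fun k => weight alpha mu N x k * node mu N k) (weight_mass * (x + node_bias)).
Proof.
  pose proof (is_series_cauchy_product2 _ _ _ _ (fun j => Rmult_le_pos _ _ (pos_INR j) (A_ge0 j))
    B_ge0 (is_series_exp_moment1 _) (is_series_e_mu mu (N * x) mu_ge0)) as S1.
  pose proof (is_series_cauchy_product2 _ _ _ _ A_ge0
    (fun m => Rmult_le_pos _ _ (dunkl_index_ge0 mu mu_ge0 m) (B_ge0 m))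
    (is_series_exp _) (is_series_e_mu_moment1 mu (N * x) mu_ge0)) as S2.
  eapply is_series_Rext;
    [| | apply (is_series_Rscal (/ N) _ _
           (is_series_Rplus _ _ _ _ (is_series_Rscal 2 _ _ S1) S2))].
  - intros k. rewrite (weight_node_expand (fun t => t)). unfold cauchy_product2.
    rewrite (scal_sum _ _ 2), <- sum_plus, scal_sum. apply sum_eq. intros j _. field. lra.
  - unfold weight_mass, node_bias. field. lra.
Qed.

Lemma is_series_weight_node_sq :
  is_series (fun k => weight alpha mu N x k * node mu N k ^ 2)
    (/ N ^ 2 * exp (alpha * x ^ 2) * (4 * (alpha * x ^ 2) * (alpha * x ^ 2 + 1) * e_mu mu (N * x)
      + 4 * (alpha * x ^ 2) * (N * x * e_mu mu (N * x))
      + N * x * (N * x * e_mu mu (N * x) + e_mu mu (N * x) + 2 * mu * e_mu mu (- (N * x))))).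
Proof.
  pose proof (is_series_cauchy_product2 _ _ _ _
    (fun j => Rmult_le_pos _ _ (Rmult_le_pos _ _ (pos_INR j) (pos_INR j)) (A_ge0 j))
    B_ge0 (is_series_exp_moment2 _) (is_series_e_mu mu (N * x) mu_ge0)) as S1.
  pose proof (is_series_cauchy_product2 _ _ _ _ (fun j => Rmult_le_pos _ _ (pos_INR j) (A_ge0 j))
    (fun m => Rmult_le_pos _ _ (dunkl_index_ge0 mu mu_ge0 m) (B_ge0 m))
    (is_series_exp_moment1 _) (is_series_e_mu_moment1 mu (N * x) mu_ge0)) as S2.
  pose proof (is_series_cauchy_product2 _ _ _ _ A_ge0
    (fun m => Rmult_le_pos _ _
       (Rmult_le_pos _ _ (dunkl_index_ge0 mu mu_ge0 m) (dunkl_index_ge0 mu mu_ge0 m)) (B_ge0 m))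
    (is_series_exp _) (is_series_e_mu_moment2 mu (N * x) mu_ge0)) as S3.
  eapply is_series_Rext; [| | apply (is_series_Rscal (/ N ^ 2) _ _ (is_series_Rplus _ _ _ _
    (is_series_Rplus _ _ _ _ (is_series_Rscal 4 _ _ S1) (is_series_Rscal 4 _ _ S2)) S3))].
  - intros k. rewrite (weight_node_expand (fun t => t ^ 2)). unfold cauchy_product2.
    rewrite (scal_sum _ _ 4), (scal_sum (fun j => INR j * _ j * (_ * _)) _ 4), <- !sum_plus,
      scal_sum.
    apply sum_eq. intros j _. field. lra.
  - field. lra.
Qed.

Lemma is_series_weight_central2 :
  is_series (fun k => weight alpha mu N x k * (node mu N k - x) ^ 2) (weight_mass * node_variance).
Proof.
  pose proof e_mu_Nx_pos.
  eapply is_series_Rext; [| | apply (is_series_Rplus _ _ _ _ (is_series_Rminus _ _ _ _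
    is_series_weight_node_sq (is_series_Rscal (2 * x) _ _ is_series_weight_node))
    (is_series_Rscal (x ^ 2) _ _ is_series_weight))].
  - intros k. cbv beta. ring.
  - unfold weight_mass, node_bias, node_variance. field. lra.
Qed.

Lemma node_bias_ge0 : 0 <= node_bias.
Proof. apply Rmult_le_pos; [nra | left; apply Rinv_0_lt_compat, N_pos]. Qed.

Lemma node_variance_add_bias_sq_pos : 0 < x -> 0 < node_variance + node_bias ^ 2.
Proof.
  intros Hx. pose proof weight_mass_pos. pose proof (pow2_ge_0 node_bias).
  pose proof (is_series_first_term_le _ _
    (fun k => Rmult_le_pos _ _ (weight_ge0 k) (pow2_ge_0 (node mu N k - x)))
    is_series_weight_central2) as Hfirst.
  cbv beta in Hfirst. rewrite weight_0, node_0 in Hfirst.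
  assert (0 < node_variance) by (apply (Rmult_lt_reg_l weight_mass); nra).
  lra.
Qed.

Lemma node_variance_add_bias_sq : node_variance + node_bias ^ 2 =
  / N ^ 2 * x * (8 * x ^ 3 * alpha ^ 2 + 4 * x * alpha + N)
  + 2 * mu * x / N * (e_mu mu (- (N * x)) / e_mu mu (N * x)).
Proof. pose proof e_mu_Nx_pos. unfold node_variance, node_bias. field. lra. Qed.

End WeightMoments.

Lemma e_mu_0 mu : 0 <= mu -> e_mu mu 0 = 1.
Proof.
  intros Hmu. apply (is_series_unique (e_mu_term mu 0)).
  replace 1 with (e_mu_term mu 0 0)
    by (unfold e_mu_term; rewrite gamma_mu_0 by exact Hmu; field).
  apply is_series_first_term_only. intros k. unfold e_mu_term. simpl. unfold Rdiv. ring.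
Qed.

Lemma T_op_at_0 alpha mu n f : 0 <= mu -> T_op alpha mu n f 0 = f 0.
Proof.
  intros Hmu. rewrite T_op_weight, Rmult_0_r, e_mu_0 by exact Hmu.
  rewrite (is_series_unique _ (weight alpha mu (INR n) 0 0 * f (node mu (INR n) 0))).
  - rewrite weight_0, node_0 by exact Hmu.
    replace (alpha * 0 ^ 2) with 0 by ring. rewrite exp_0. field.
  - apply (is_series_first_term_only
      (fun k => weight alpha mu (INR n) 0 k * f (node mu (INR n) k))).
    intros k. unfold weight. simpl. ring.
Qed.

(** * Moduli of continuity and smoothness *)

Lemma Lub_Rbar_real_ge (E : R -> Prop) v B :
  E v -> (forall u, E u -> u <= B) -> v <= real (Lub_Rbar E).
Proof.
  intros Hv HB. destruct (Lub_Rbar_correct E) as [Hub Hl].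
  specialize (Hub v Hv). assert (Hle : Rbar_le (Lub_Rbar E) B) by (apply Hl; exact HB).
  destruct (Lub_Rbar E); simpl in *; tauto.
Qed.

(* [0 <= B] covers the empty case, whose supremum [m_infty] has [real] part [0]. *)
Lemma Lub_Rbar_real_le (E : R -> Prop) B :
  0 <= B -> (forall u, E u -> u <= B) -> real (Lub_Rbar E) <= B.
Proof.
  intros HB0 HB.
  assert (Hle : Rbar_le (Lub_Rbar E) B) by (apply (proj2 (Lub_Rbar_correct E)); exact HB).
  destruct (Lub_Rbar E); simpl in *; tauto || lra.
Qed.

Lemma Lub_Rbar_real_ge0 (E : R -> Prop) : (forall u, E u -> 0 <= u) -> 0 <= real (Lub_Rbar E).
Proof.
  intros H. destruct (Lub_Rbar_correct E) as [Hub Hl].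
  destruct (classic (exists v, E v)) as [[v Hv] | Hn].
  - specialize (Hub v Hv). specialize (H v Hv). destruct (Lub_Rbar E); simpl in *; lra.
  - assert (Hle : Rbar_le (Lub_Rbar E) m_infty) by (apply Hl; intros u Hu; exfalso; eauto).
    destruct (Lub_Rbar E); simpl in *; tauto || lra.
Qed.

Lemma omega_ge0 g d : 0 <= omega g d.
Proof. apply Lub_Rbar_real_ge0. intros u (s & t & _ & _ & _ & ->). apply Rabs_pos. Qed.

Lemma omega2_ge0 g d : 0 <= omega2 g d.
Proof.
  apply Lub_Rbar_real_ge0. intros u (s & _ & _ & ->).
  apply Lub_Rbar_real_ge0. intros v (y & _ & ->). apply Rabs_pos.
Qed.

Definition diff2 (f : R -> R) y s := f (y + 2 * s) - 2 * f (y + s) + f y.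

Lemma diff2_0 f y : diff2 f y 0 = 0.
Proof. unfold diff2. rewrite Rmult_0_r, Rplus_0_r. ring. Qed.

Lemma Rabs_diff2_le (f : R -> R) B y s : (forall t, 0 <= t -> Rabs (f t) <= B) ->
  0 <= y -> 0 <= s -> Rabs (diff2 f y s) <= 4 * B.
Proof.
  intros HB Hy Hs. unfold diff2.
  pose proof (HB (y + 2 * s) ltac:(lra)). pose proof (HB (y + s) ltac:(lra)). pose proof (HB y Hy).
  eapply Rle_trans; [apply Rabs_triang |].
  eapply Rle_trans; [apply Rplus_le_compat_r, Rabs_triang |].
  rewrite Rabs_Ropp, Rabs_mult, (Rabs_pos_eq 2) by lra. lra.
Qed.

Section BoundedUniformlyContinuous.

Variable g : R -> R.
Hypothesis g_CB : CB g.

Lemma CB_bounded : exists B, 0 <= B /\ forall t, 0 <= t -> Rabs (g t) <= B.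
Proof.
  destruct g_CB as [[B HB] _]. exists (Rmax 0 B). split; [apply Rmax_l |].
  intros t Ht. eapply Rle_trans; [apply HB, Ht | apply Rmax_r].
Qed.

Lemma Rabs_sub_le_omega s t d : 0 <= s -> 0 <= t -> Rabs (s - t) <= d ->
  Rabs (g s - g t) <= omega g d.
Proof.
  intros Hs Ht Hd. destruct CB_bounded as [B [HB0 HB]].
  apply (Lub_Rbar_real_ge _ _ (2 * B)); [exists s, t; auto |].
  intros u (s' & t' & Hs' & Ht' & _ & ->).
  eapply Rle_trans; [apply Rabs_triang |]. rewrite Rabs_Ropp.
  pose proof (HB s' Hs'). pose proof (HB t' Ht'). lra.
Qed.

Lemma Rabs_diff2_le_omega2 y s d : 0 <= y -> 0 < s <= d -> Rabs (diff2 g y s) <= omega2 g d.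
Proof.
  intros Hy Hs. destruct CB_bounded as [B [HB0 HB]].
  set (sup_diff2 s' :=
    real (Lub_Rbar (fun w => exists y', 0 <= y' /\ w = Rabs (diff2 g y' s')))).
  assert (Hbound : forall s', 0 < s' ->
    forall u, (exists y', 0 <= y' /\ u = Rabs (diff2 g y' s')) -> u <= 4 * B).
  { intros s' Hs' u (y' & Hy' & ->). apply Rabs_diff2_le; [exact HB | exact Hy' | lra]. }
  apply (Rle_trans _ (sup_diff2 s)).
  - apply (Lub_Rbar_real_ge _ _ (4 * B)); [exists y; split; [exact Hy | reflexivity] |].
    apply Hbound. lra.
  - apply (Lub_Rbar_real_ge _ _ (4 * B)).
    { exists s. split; [lra | split; [lra | reflexivity]]. }
    intros u (s' & Hs' & _ & ->). apply Lub_Rbar_real_le; [lra | apply Hbound, Hs'].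
Qed.

Lemma continuous_extend_Rmax0 y : continuous (fun t => g (Rmax 0 t)) y.
Proof.
  destruct g_CB as [_ Hu]. apply filterlim_locally. intros eps.
  destruct (Hu eps (cond_pos eps)) as [d [Hd Hdd]].
  exists (mkposreal d Hd). intros z Hz.
  change (Rabs (z - y) < d) in Hz. apply Hdd; [apply Rmax_l | apply Rmax_l |].
  eapply Rle_lt_trans; [| exact Hz].
  unfold Rmax; repeat destruct Rle_dec; unfold Rabs; repeat destruct Rcase_abs; lra.
Qed.

End BoundedUniformlyContinuous.

(** * A smoothing of continuous functions *)

Lemma MVT_Rabs_le (f df : R -> R) a b K : (forall u, is_derive f u (df u)) ->
  (forall c, Rmin a b <= c <= Rmax a b -> Rabs (df c) <= K) ->
  Rabs (f b - f a) <= K * Rabs (b - a).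
Proof.
  intros Hd HK. destruct (MVT_gen f a b df) as [c [Hc ->]].
  - intros u _. apply Hd.
  - intros u _. apply continuity_pt_filterlim, (@ex_derive_continuous R_AbsRing R_NormedModule).
    eexists. apply Hd.
  - rewrite Rabs_mult. apply Rmult_le_compat_r; [apply Rabs_pos | apply HK, Hc].
Qed.

Lemma taylor1_Rabs_le (F F1 F2 : R -> R) a b C :
  (forall u, is_derive F u (F1 u)) -> (forall u, is_derive F1 u (F2 u)) ->
  (forall u, Rmin a b <= u <= Rmax a b -> Rabs (F2 u) <= C) ->
  Rabs (F b - F a - F1 a * (b - a)) <= C * (b - a) ^ 2.
Proof.
  intros HF HF1 HC.
  set (psi u := F u - F a - F1 a * (u - a)).
  assert (Hpsi : forall u, is_derive psi u (F1 u - F1 a)).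
  { intros u. unfold psi. auto_derive; [eexists; apply HF |].
    rewrite (is_derive_unique (fun x : R => F x) u _ (HF u)). ring. }
  assert (HC0 : 0 <= C).
  { apply (Rle_trans _ (Rabs (F2 a))); [apply Rabs_pos | apply HC].
    unfold Rmin, Rmax; destruct Rle_dec; lra. }
  assert (HF1a : forall c, Rmin a b <= c <= Rmax a b ->
    Rabs (F1 c - F1 a) <= C * Rabs (b - a)).
  { intros c Hc. eapply Rle_trans; [apply (MVT_Rabs_le F1 F2 a c C HF1) |].
    - intros d Hd. apply HC. unfold Rmin, Rmax in *. repeat destruct Rle_dec; lra.
    - apply Rmult_le_compat_l; [exact HC0 |].
      apply Rabs_le_between_min_max. rewrite Rmin_comm, Rmax_comm. exact Hc. }
  replace (F b - F a - F1 a * (b - a)) with (psi b - psi a) by (unfold psi; ring).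
  replace ((b - a) ^ 2) with (Rabs (b - a) * Rabs (b - a))
    by (rewrite <- (pow2_abs (b - a)); ring).
  rewrite <- Rmult_assoc. apply (MVT_Rabs_le psi _ a b _ Hpsi HF1a).
Qed.

Section Smoothing.

Variable f : R -> R.
Hypothesis f_cont : forall y, continuous f y.

Definition primitive1 y := RInt f 0 y.
Definition primitive2 y := RInt primitive1 0 y.

Lemma is_derive_primitive1 y : is_derive primitive1 y (f y).
Proof.
  apply (is_derive_RInt f primitive1 0 y); [| apply f_cont].
  apply filter_forall. intros b. apply (@RInt_correct R_CompleteNormedModule).
  apply (@ex_RInt_continuous R_CompleteNormedModule). intros; apply f_cont.
Qed.

Lemma continuous_primitive1 y : continuous primitive1 y.
Proof.
  apply (@ex_derive_continuous R_AbsRing R_NormedModule). eexists. apply is_derive_primitive1.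
Qed.

Lemma is_derive_primitive2 y : is_derive primitive2 y (primitive1 y).
Proof.
  apply (is_derive_RInt primitive1 primitive2 0 y); [| apply continuous_primitive1].
  apply filter_forall. intros b. apply (@RInt_correct R_CompleteNormedModule).
  apply (@ex_RInt_continuous R_CompleteNormedModule). intros; apply continuous_primitive1.
Qed.

Variable h : R.
Hypothesis h_pos : 0 < h.

(* Twice the mean of [f (y + s + t)] over [0, h/2]^2 minus its mean over [0, h]^2. *)
Definition smooth y := (8 * diff2 primitive2 y (h / 2) - diff2 primitive2 y h) / h ^ 2.
Definition smooth_d1 y := (8 * diff2 primitive1 y (h / 2) - diff2 primitive1 y h) / h ^ 2.
Definition smooth_d2 y := (8 * diff2 f y (h / 2) - diff2 f y h) / h ^ 2.

Lemma is_derive_smooth y : is_derive smooth y (smooth_d1 y).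
Proof.
  unfold smooth, smooth_d1, diff2.
  auto_derive; [repeat split; eexists; apply is_derive_primitive2 |].
  rewrite !(is_derive_unique (fun z : R => primitive2 z) _ _ (is_derive_primitive2 _)).
  field. lra.
Qed.

Lemma is_derive_smooth_d1 y : is_derive smooth_d1 y (smooth_d2 y).
Proof.
  unfold smooth_d1, smooth_d2, diff2.
  auto_derive; [repeat split; eexists; apply is_derive_primitive1 |].
  rewrite !(is_derive_unique (fun z : R => primitive1 z) _ _ (is_derive_primitive1 _)).
  field. lra.
Qed.

Variable W : R.
Hypothesis diff2_le : forall y s, 0 <= y -> 0 < s <= h -> Rabs (diff2 f y s) <= W.

Lemma smooth_d2_le y : 0 <= y -> Rabs (smooth_d2 y) <= 9 * W / h ^ 2.
Proof.
  intros Hy. unfold smooth_d2, Rdiv. rewrite Rabs_mult, (Rabs_pos_eq (/ h ^ 2))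
    by (left; apply Rinv_0_lt_compat, pow_lt, h_pos).
  apply Rmult_le_compat_r; [left; apply Rinv_0_lt_compat, pow_lt, h_pos |].
  pose proof (diff2_le y (h / 2) Hy ltac:(lra)). pose proof (diff2_le y h Hy ltac:(lra)).
  eapply Rle_trans; [apply Rabs_triang |].
  rewrite Rabs_Ropp, Rabs_mult, Rabs_pos_eq by lra. lra.
Qed.

Lemma smooth_taylor_le x t : 0 <= x -> 0 <= t ->
  Rabs (smooth t - smooth x - smooth_d1 x * (t - x)) <= 9 * W / h ^ 2 * (t - x) ^ 2.
Proof.
  intros Hx Ht.
  apply (taylor1_Rabs_le smooth smooth_d1 smooth_d2);
    [apply is_derive_smooth | apply is_derive_smooth_d1 |].
  intros u Hu. apply smooth_d2_le. unfold Rmin in Hu; destruct Rle_dec; lra.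
Qed.

(* [Phi u / u^2] is the smoothing with parameter [u] at [x], minus [f x]; its second
   derivative is a combination of second differences of [f]. *)
Lemma smooth_approx_le x : 0 <= x -> Rabs (smooth x - f x) <= 6 * W.
Proof.
  intros Hx.
  set (Phi u := 8 * diff2 primitive2 x (u / 2) - diff2 primitive2 x u - u ^ 2 * f x).
  set (Phi1 u := 8 * (primitive1 (x + u) - primitive1 (x + u / 2))
                 - 2 * (primitive1 (x + 2 * u) - primitive1 (x + u)) - 2 * u * f x).
  set (Phi2 u := - 4 * diff2 f x u + 2 * diff2 f x (u / 2)).
  assert (HW0 : 0 <= W) by (eapply Rle_trans; [apply Rabs_pos | apply (diff2_le x h); lra]).
  assert (Hbound : forall u, Rmin 0 h <= u <= Rmax 0 h -> Rabs (Phi2 u) <= 6 * W).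
  { intros u Hu. rewrite Rmin_left, Rmax_right in Hu by lra. unfold Phi2.
    destruct (Req_dec u 0) as [-> | Hu0].
    - replace (0 / 2) with 0 by field. rewrite !diff2_0, !Rmult_0_r, Rplus_0_r, Rabs_R0. lra.
    - pose proof (diff2_le x u Hx ltac:(lra)). pose proof (diff2_le x (u / 2) Hx ltac:(lra)).
      eapply Rle_trans; [apply Rabs_triang |].
      rewrite !Rabs_mult, (Rabs_pos_eq 2), Rabs_left by lra. lra. }
  assert (HPhi : forall u : R, is_derive Phi u (Phi1 u)).
  { intros u. unfold Phi, Phi1, diff2.
    auto_derive; [repeat split; eexists; apply is_derive_primitive2 |].
    rewrite !(is_derive_unique (fun z : R => primitive2 z) _ _ (is_derive_primitive2 _)).
    replace (2 * (u * / 2)) with u by field. unfold Rdiv. field. }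
  assert (HPhi1 : forall u : R, is_derive Phi1 u (Phi2 u)).
  { intros u. unfold Phi1, Phi2, diff2.
    auto_derive; [repeat split; eexists; apply is_derive_primitive1 |].
    rewrite !(is_derive_unique (fun z : R => primitive1 z) _ _ (is_derive_primitive1 _)).
    unfold Rdiv. replace (2 * (u * / 2)) with u by field. field. }
  pose proof (taylor1_Rabs_le Phi Phi1 Phi2 0 h (6 * W) HPhi HPhi1 Hbound) as H.
  replace (Phi h - Phi 0 - Phi1 0 * (h - 0)) with (h ^ 2 * (smooth x - f x)) in H.
  2: { unfold Phi, Phi1, smooth. replace (0 / 2) with 0 by field.
       rewrite !diff2_0, !Rmult_0_r, !Rplus_0_r. field. lra. }
  rewrite Rabs_mult, Rabs_pos_eq in H by (apply pow_le; lra).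
  apply (Rmult_le_reg_l (h ^ 2)); [apply pow_lt, h_pos | lra].
Qed.

End Smoothing.

(** * Positive linear functionals with prescribed moments *)

Section PositiveFunctional.

Variables (w p : nat -> R) (m x beta T2 : R).
Hypothesis w_ge0 : forall k, 0 <= w k.
Hypothesis p_ge0 : forall k, 0 <= p k.
Hypothesis m_pos : 0 < m.
Hypothesis x_ge0 : 0 <= x.
Hypothesis beta_ge0 : 0 <= beta.
Hypothesis is_series_w : is_series w m.
Hypothesis is_series_w_p : is_series (fun k => w k * p k) (m * (x + beta)).
Hypothesis is_series_w_p_central2 : is_series (fun k => w k * (p k - x) ^ 2) (m * T2).

Lemma Rabs_Series_le_const (f : R -> R) C : (forall t, 0 <= t -> Rabs (f t) <= C) ->
  ex_series (fun k => w k * f (p k)) /\ Rabs (Series (fun k => w k * f (p k))) <= C * m.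
Proof.
  intros Hf. apply (Rabs_Series_le _ (fun k => C * w k)); [| apply is_series_Rscal, is_series_w].
  intros k. rewrite Rabs_mult, (Rabs_pos_eq (w k)), Rmult_comm by apply w_ge0.
  apply Rmult_le_compat_r; [apply w_ge0 | apply Hf, p_ge0].
Qed.

Lemma Rabs_Series_le_quadratic (f : R -> R) K :
  (forall t, 0 <= t -> Rabs (f t) <= K * (t - x) ^ 2) ->
  ex_series (fun k => w k * f (p k)) /\ Rabs (Series (fun k => w k * f (p k))) <= K * (m * T2).
Proof.
  intros Hf. apply (Rabs_Series_le _ (fun k => K * (w k * (p k - x) ^ 2)));
    [| apply is_series_Rscal, is_series_w_p_central2].
  intros k. rewrite Rabs_mult, (Rabs_pos_eq (w k)) by apply w_ge0.
  rewrite (Rmult_comm K), Rmult_assoc. apply Rmult_le_compat_l; [apply w_ge0 |].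
  rewrite Rmult_comm. apply Hf, p_ge0.
Qed.

(* Split [g] as [(g - phi) + (phi - tangent of phi at x) + tangent]; the functional reproduces
   the tangent up to the bias [beta], which is paid for at [x + beta]. *)
Lemma smooth_functional_estimate (g phi : R -> R) phi1x A K :
  (forall t, 0 <= t -> Rabs (g t - phi t) <= A) ->
  (forall t, 0 <= t -> Rabs (phi t - phi x - phi1x * (t - x)) <= K * (t - x) ^ 2) ->
  Rabs (/ m * Series (fun k => w k * g (p k)) - g x) <=
    2 * A + K * (T2 + beta ^ 2) + Rabs (g (x + beta) - g x).
Proof.
  intros Happ Htaylor.
  destruct (Rabs_Series_le_const _ A Happ) as [Ex1 B1].
  destruct (Rabs_Series_le_quadratic _ K Htaylor) as [Ex2 B2].
  set (Sa := Series (fun k => w k * (g (p k) - phi (p k)))) in *.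
  set (Sb := Series (fun k => w k * (phi (p k) - phi x - phi1x * (p k - x)))) in *.
  assert (Hdec : Series (fun k => w k * g (p k)) = Sa + Sb + m * phi x + phi1x * (m * beta)).
  { apply is_series_unique.
    eapply is_series_Rext; [| | apply (is_series_Rplus _ _ _ _
      (is_series_Rplus _ _ _ _
         (is_series_Rplus _ _ _ _ (Series_correct _ Ex1) (Series_correct _ Ex2))
         (is_series_Rscal (phi x) _ _ is_series_w))
      (is_series_Rscal phi1x _ _
         (is_series_Rminus _ _ _ _ is_series_w_p (is_series_Rscal x _ _ is_series_w))))].
    - intros k. cbv beta. ring.
    - unfold Sa, Sb. cbv beta. ring. }
  pose proof (Happ (x + beta) ltac:(lra)) as B3.
  pose proof (Htaylor (x + beta) ltac:(lra)) as B4.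
  replace (x + beta - x) with beta in B4 by ring.
  assert (Ha : Rabs (Sa / m) <= A).
  { unfold Rdiv. rewrite Rabs_mult, Rabs_inv, (Rabs_pos_eq m) by lra.
    apply (Rmult_le_reg_r m); [exact m_pos |]. rewrite Rmult_assoc, Rinv_l by lra. lra. }
  assert (Hb : Rabs (Sb / m) <= K * T2).
  { unfold Rdiv. rewrite Rabs_mult, Rabs_inv, (Rabs_pos_eq m) by lra.
    apply (Rmult_le_reg_r m); [exact m_pos |]. rewrite Rmult_assoc, Rinv_l by lra. lra. }
  rewrite Hdec.
  replace (/ m * (Sa + Sb + m * phi x + phi1x * (m * beta)) - g x) with
    (Sa / m + Sb / m - (phi (x + beta) - phi x - phi1x * beta)
     - (g (x + beta) - phi (x + beta)) + (g (x + beta) - g x)) by (field; lra).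
  pose proof (proj1 (Rabs_le_between _ _) (Rle_refl (Rabs (g (x + beta) - g x)))) as B5.
  apply Rabs_le_between in Ha, Hb, B3, B4. apply Rabs_le_between. lra.
Qed.

Lemma functional_estimate (g : R -> R) : CB g -> 0 < T2 + beta ^ 2 ->
  Rabs (/ m * Series (fun k => w k * g (p k)) - g x) <=
    48 * omega2 g (/ 2 * sqrt (T2 + beta ^ 2)) + omega g beta.
Proof.
  intros Hg HV.
  set (h := / 2 * sqrt (T2 + beta ^ 2)).
  assert (Hh : 0 < h) by (pose proof (sqrt_lt_R0 _ HV); unfold h; lra).
  assert (Hh2 : h ^ 2 = (T2 + beta ^ 2) / 4).
  { unfold h. rewrite Rpow_mult_distr, pow2_sqrt by lra. field. }
  set (W := omega2 g h).
  (* The smoothing needs [g] continuous on all of [R]: extend it by [g 0] to the left. *)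
  set (g0 t := g (Rmax 0 t)).
  assert (Hg0 : forall t, 0 <= t -> g0 t = g t)
    by (intros t Ht; unfold g0; rewrite Rmax_right; auto).
  assert (HW : forall y s, 0 <= y -> 0 < s <= h -> Rabs (diff2 g0 y s) <= W).
  { intros y s Hy Hs. unfold diff2. rewrite !Hg0 by lra.
    apply Rabs_diff2_le_omega2; assumption. }
  pose proof (continuous_extend_Rmax0 g Hg) as Hcont.
  eapply Rle_trans.
  { apply (smooth_functional_estimate g (smooth g0 h) (smooth_d1 g0 h x) (6 * W)
      (9 * W / h ^ 2)).
    - intros t Ht. rewrite Rabs_minus_sym, <- (Hg0 t Ht). apply smooth_approx_le; assumption.
    - intros t Ht. apply smooth_taylor_le; assumption. }
  assert (Hom : Rabs (g (x + beta) - g x) <= omega g beta).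
  { apply Rabs_sub_le_omega; [exact Hg | lra | exact x_ge0 |].
    replace (x + beta - x) with beta by ring. rewrite Rabs_pos_eq; lra. }
  replace (9 * W / h ^ 2 * (T2 + beta ^ 2)) with (36 * W) by (rewrite Hh2; field; lra).
  fold h. lra.
Qed.

End PositiveFunctional.

Theorem theorem10 (alpha mu : R) (Halpha : 0 <= alpha) (Hmu : 0 <= mu) :
  exists M : R, 0 < M /\
    forall (g : R -> R) (n : nat) (x : R),
      CB g -> (1 <= n)%nat -> 0 <= x ->
      Rabs (T_op alpha mu n g x - g x) <=
        M * omega2 g (/ 2 * sqrt (/ (INR n) ^ 2 * x *
                                    (8 * x ^ 3 * alpha ^ 2 + 4 * x * alpha + INR n)
                                  + 2 * mu * x / INR n
                                    * (e_mu mu (- (INR n * x)) / e_mu mu (INR n * x))))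
        + omega g (2 * alpha * x ^ 2 / INR n).
Proof.
  exists 48. split; [lra |].
  intros g n x Hg Hn Hx.
  assert (HN : 0 < INR n) by (apply lt_0_INR; lia).
  destruct (Req_dec x 0) as [-> | Hx0].
  - rewrite T_op_at_0, Rminus_diag, Rabs_R0 by exact Hmu.
    apply Rplus_le_le_0_compat; [apply Rmult_le_pos; [lra | apply omega2_ge0] | apply omega_ge0].
  - rewrite <- node_variance_add_bias_sq by assumption.
    change (2 * alpha * x ^ 2 / INR n) with (node_bias alpha (INR n) x).
    rewrite T_op_weight.
    change (exp (alpha * x ^ 2) * e_mu mu (INR n * x)) with (weight_mass alpha mu (INR n) x).
    apply functional_estimate; try assumption.
    + apply weight_ge0; assumption.
    + apply node_ge0; assumption.
    + apply weight_mass_pos; assumption.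
    + apply node_bias_ge0; assumption.
    + apply is_series_weight; assumption.
    + apply is_series_weight_node; assumption.
    + apply is_series_weight_central2; assumption.
    + apply node_variance_add_bias_sq_pos; lra.
Qed.
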